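(* Let $N\ge3$, $h=1/N$, $\rho_j=jh$, $I_j=[\rho_{j-1},\rho_j]$ ($j=1,\dots,N$, with $\rho_0\equiv\rho_N$ on $\mathbb{T}=\mathbb{R}/\mathbb{Z}$), and let $\mathbb{K}^h$ be the space of continuous periodic functions on $\mathbb{T}$ that are linear on each $I_j$. Let $(\boldsymbol{X}^h(\cdot,t),V^h(\cdot,t),\kappa^h(\cdot,t))\in[\mathbb{K}^h]^2\times\mathbb{K}^h\times\mathbb{K}^h$, $t\ge0$ (differentiable in $t$, with all segment lengths $|\boldsymbol{h}_j(t)|>0$), be a solution of: for all $t\ge0$, $$\big(\boldsymbol{n}^h\cdot\partial_t\boldsymbol{X}^h,\phi^h\big)^h_{\Gamma^h(t)}=\big(V^h,\phi^h\big)^h_{\Gamma^h(t)}\quad\forall\phi^h\in\mathbb{K}^h,$$ $$\big(V^h\boldsymbol{n}^h,\boldsymbol{\omega}^h\big)^h_{\Gamma^h(t)}=\Big(-\partial_s\kappa^h\,\boldsymbol{n}^h+\tfrac12(\kappa^h)^2\partial_s\boldsymbol{X}^h,\,\partial_s\boldsymbol{\omega}^h\Big)^h_{\Gamma^h(t)}\quad\forall\boldsymbol{\omega}^h\in[\mathbb{K}^h]^2,$$ $$\big(\partial_t\kappa^h,\psi^h\big)^h_{\Gamma^h(t)}=\big(\boldsymbol{n}^h\cdot\partial_s(\partial_t\boldsymbol{X}^h),\partial_s\psi^h\big)^h_{\Gamma^h(t)}-\big((\partial_s\boldsymbol{X}^h\cdot\partial_s(\partial_t\boldsymbol{X}^h))\,\kappa^h,\psi^h\big)^h_{\Gamma^h(t)}\quad\forall\psi^h\in\mathbb{K}^h,$$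 with initial data $\boldsymbol{X}^h(\cdot,0)=\boldsymbol{X}^h_0$, $\kappa^h(\cdot,0)=\kappa^h_0$. Then the discrete Willmore energy $$W^h(t):=\tfrac12\big((\kappa^h(\cdot,t))^2,1\big)^h_{\Gamma^h(t)}=\tfrac14\sum_{j=1}^N|\boldsymbol{h}_j(t)|\Big[(\kappa^h(\rho_{j-1},t))^2+(\kappa^h(\rho_j,t))^2\Big]$$ satisfies $W^h(t)\le W^h(t')\le W^h(0)$ for all $t\ge t'\ge0$, where $W^h(0)=\tfrac14\sum_{j=1}^N|\boldsymbol{h}_{0,j}|\big[(\kappa^h_0(\rho_{j-1}))^2+(\kappa^h_0(\rho_j))^2\big]$ with $\boldsymbol{h}_{0,j}=\boldsymbol{X}^h_0(\rho_j)-\boldsymbol{X}^h_0(\rho_{j-1})$.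
   Context: For $\boldsymbol{X}^h\in[\mathbb{K}^h]^2$, the polygon $\Gamma^h=\boldsymbol{X}^h(\mathbb{T})$ has edges $\boldsymbol{h}_j=\boldsymbol{X}^h(\rho_j)-\boldsymbol{X}^h(\rho_{j-1})$. For $u^h\in\mathbb{K}^h$ (or $[\mathbb{K}^h]^2$), the discrete arc-length derivative is the piecewise constant $\partial_s u^h|_{I_j}=\frac{u^h(\rho_j)-u^h(\rho_{j-1})}{|\boldsymbol{h}_j|}$. Discrete tangent and normal: $\boldsymbol{\tau}^h|_{I_j}=\partial_s\boldsymbol{X}^h|_{I_j}=\boldsymbol{h}_j/|\boldsymbol{h}_j|$, $\boldsymbol{n}^h|_{I_j}=-\boldsymbol{h}_j^\perp/|\boldsymbol{h}_j|$ with $(u_1,u_2)^\perp=(-u_2,u_1)$. Mass-lumped inner product for piecewise continuous (scalar or vector) $u,v$: $(u,v)^h_{\Gamma^h}=\frac12\sum_{j=1}^N|\boldsymbol{h}_j|\big[(u\cdot v)(\rho_{j-1}^+)+(u\cdot v)(\rho_j^-)\big]$, where one-sided limits are taken within $I_j$. *)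

From Stdlib Require Import Reals Lra.
From Coquelicot Require Import Coquelicot.
Open Scope R_scope.

(* Elements of K^h (continuous periodic P1 functions on T with nodes
   rho_j = j/N) are represented by their nodal values u : nat -> R, where
   u j = u^h(rho_j); only j mod N matters (periodicity rho_0 = rho_N). *)
Definition nd (N : nat) (u : nat -> R) (j : nat) : R := u (j mod N).

(* A piecewise continuous function on the mesh, described by its one-sided
   limits on each interval: f k false = f(rho_k^+), f k true = f(rho_{k+1}^-)
   on the interval I_{k+1} = [rho_k, rho_{k+1}], k = 0..N-1. *)
Definition PW := nat -> bool -> R.

Definition lift (N : nat) (u : nat -> R) : PW :=
  fun k b => if b then nd N u (S k) else nd N u k.

(* components of the edge vector h_{k+1} = X(rho_{k+1}) - X(rho_k) *)
Definition hcomp (N : nat) (Xi : nat -> R) (k : nat) : R :=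
  nd N Xi (S k) - nd N Xi k.

Definition elen (N : nat) (X1 X2 : nat -> R) (k : nat) : R :=
  sqrt (hcomp N X1 k ^ 2 + hcomp N X2 k ^ 2).

Definition ds (N : nat) (X1 X2 : nat -> R) (u : nat -> R) : PW :=
  fun k _ => (nd N u (S k) - nd N u k) / elen N X1 X2 k.

(* discrete normal n^h = - h^perp / |h| with (u1,u2)^perp = (-u2,u1),
   i.e. n^h = (h_2, -h_1)/|h| *)
Definition nrm1 (N : nat) (X1 X2 : nat -> R) : PW :=
  fun k _ => hcomp N X2 k / elen N X1 X2 k.
Definition nrm2 (N : nat) (X1 X2 : nat -> R) : PW :=
  fun k _ => - hcomp N X1 k / elen N X1 X2 k.

(* mass-lumped integral over Gamma^h of a piecewise continuous scalar
   (the integrand u.v is passed already multiplied out):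
   (u,v)^h = 1/2 sum_{j=1}^N |h_j| [ (u.v)(rho_{j-1}^+) + (u.v)(rho_j^-) ] *)
Definition lump (N : nat) (X1 X2 : nat -> R) (f : PW) : R :=
  sum_f_R0 (fun k => / 2 * elen N X1 X2 k * (f k false + f k true)) (pred N).

Definition pmul (f g : PW) : PW := fun k b => f k b * g k b.
Definition padd (f g : PW) : PW := fun k b => f k b + g k b.
Definition psub (f g : PW) : PW := fun k b => f k b - g k b.
Definition pscal (c : R) (f : PW) : PW := fun k b => c * f k b.
Definition popp (f : PW) : PW := fun k b => - f k b.
Definition pone : PW := fun _ _ => 1.

Definition Wh (N : nat) (X1 X2 kap : nat -> R) : R :=
  / 2 * lump N X1 X2 (pmul (pmul (lift N kap) (lift N kap)) pone).

From Stdlib Require Import Reals.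
From Coquelicot Require Import Coquelicot.
Open Scope R_scope.
From Stdlib Require Import Lra Lia FunctionalExtensionality.

(* Since d|h_j|/dt = |h_j| (d_s X . d_s d_t X) on each edge, the energy rate is
   dW/dt = (d_t kappa, kappa)^h + 1/2 ((d_s X . d_s d_t X) kappa^2, 1)^h.
   Testing the third equation with psi = kappa, the second with omega = d_t X
   and the first with phi = V, the stretching terms cancel and
   dW/dt = -(V, V)^h <= 0.  The mean value theorem gives monotonicity for
   t > 0, and right-continuity of W at 0 extends it to t' = 0. *)

Section Lumped_integral.

Variables (N : nat) (X1 X2 : nat -> R).

Lemma lump_ext (f g : PW) :
  (forall k b, f k b = g k b) -> lump N X1 X2 f = lump N X1 X2 g.
Proof. intros Hfg. unfold lump. apply sum_eq. intros k _. now rewrite !Hfg. Qed.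

Lemma lump_padd (f g : PW) :
  lump N X1 X2 (padd f g) = lump N X1 X2 f + lump N X1 X2 g.
Proof. unfold lump, padd. rewrite <- plus_sum. apply sum_eq. intros k _. ring. Qed.

Lemma lump_pscal (c : R) (f : PW) :
  lump N X1 X2 (pscal c f) = c * lump N X1 X2 f.
Proof. unfold lump, pscal. rewrite scal_sum. apply sum_eq. intros k _. ring. Qed.

Lemma lump_popp (f : PW) : lump N X1 X2 (popp f) = - lump N X1 X2 f.
Proof.
  rewrite (lump_ext _ (pscal (-1) f)), lump_pscal; [ring|].
  intros k b. unfold popp, pscal. ring.
Qed.

Lemma lump_nonneg (f : PW) : (forall k b, 0 <= f k b) -> 0 <= lump N X1 X2 f.
Proof.
  intros Hf. unfold lump. apply cond_pos_sum. intros k.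
  apply Rmult_le_pos; [apply Rmult_le_pos; [lra | apply sqrt_pos]|].
  apply Rplus_le_le_0_compat; apply Hf.
Qed.

End Lumped_integral.

Definition stretch_rate (N : nat) (X1 X2 dX1 dX2 : nat -> R) : PW :=
  padd (pmul (ds N X1 X2 X1) (ds N X1 X2 dX1)) (pmul (ds N X1 X2 X2) (ds N X1 X2 dX2)).

Lemma is_derive_hcomp (N : nat) (X : R -> nat -> R) (dX : nat -> R) (t : R) (k : nat) :
  (forall j, is_derive (fun s => X s j) t (dX j)) ->
  is_derive (fun s => hcomp N (X s) k) t (hcomp N dX k).
Proof.
  intros HX. unfold hcomp, nd.
  apply (is_derive_minus (fun s => X s _) (fun s => X s _)); apply HX.
Qed.

Lemma is_derive_elen (N : nat) (X1 X2 : R -> nat -> R) (dX1 dX2 : nat -> R) (t : R) (k : nat) :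
  (forall j, is_derive (fun s => X1 s j) t (dX1 j)) ->
  (forall j, is_derive (fun s => X2 s j) t (dX2 j)) ->
  0 < elen N (X1 t) (X2 t) k ->
  is_derive (fun s => elen N (X1 s) (X2 s) k) t
    (elen N (X1 t) (X2 t) k * stretch_rate N (X1 t) (X2 t) dX1 dX2 k false).
Proof.
  intros HX1 HX2 Hpos.
  assert (Hsq : is_derive (fun s => hcomp N (X1 s) k ^ 2 + hcomp N (X2 s) k ^ 2) t
                  (INR 2 * hcomp N dX1 k * hcomp N (X1 t) k ^ 1
                   + INR 2 * hcomp N dX2 k * hcomp N (X2 t) k ^ 1)).
  { apply (is_derive_plus (fun s => hcomp N (X1 s) k ^ 2) (fun s => hcomp N (X2 s) k ^ 2));
      apply is_derive_pow, is_derive_hcomp; assumption. }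
  assert (Harg : 0 < hcomp N (X1 t) k ^ 2 + hcomp N (X2 t) k ^ 2).
  { apply sqrt_lt_0_alt. now rewrite sqrt_0. }
  assert (Hsqrt := is_derive_sqrt _ t _ Hsq Harg).
  unfold stretch_rate, padd, pmul, ds, elen in *.
  set (L := sqrt _) in *.
  replace (L * _) with ((INR 2 * hcomp N dX1 k * hcomp N (X1 t) k ^ 1
                        + INR 2 * hcomp N dX2 k * hcomp N (X2 t) k ^ 1) / (2 * L));
    [exact Hsqrt | unfold hcomp; simpl INR; field; lra].
Qed.

Lemma is_derive_lump (N : nat) (X1 X2 : R -> nat -> R) (dX1 dX2 : nat -> R)
  (f : R -> PW) (df : PW) (t : R) :
  (0 < N)%nat ->
  (forall j, is_derive (fun s => X1 s j) t (dX1 j)) ->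
  (forall j, is_derive (fun s => X2 s j) t (dX2 j)) ->
  (forall k b, is_derive (fun s => f s k b) t (df k b)) ->
  (forall k, (k < N)%nat -> 0 < elen N (X1 t) (X2 t) k) ->
  is_derive (fun s => lump N (X1 s) (X2 s) (f s)) t
    (lump N (X1 t) (X2 t) (padd df (pmul (stretch_rate N (X1 t) (X2 t) dX1 dX2) (f t)))).
Proof.
  intros HN HX1 HX2 Hf Hpos. unfold lump.
  rewrite <- sum_n_Reals.
  apply (is_derive_ext (fun s => sum_n (fun k => / 2 * elen N (X1 s) (X2 s) k
                                                 * (f s k false + f s k true)) (pred N))).
  { intros s. apply sum_n_Reals. }
  apply (is_derive_sum_n (K := R_AbsRing) (V := R_NormedModule)
           (fun k s => / 2 * elen N (X1 s) (X2 s) k * (f s k false + f s k true))).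
  intros k Hk.
  assert (Hlen := is_derive_elen N X1 X2 dX1 dX2 t k HX1 HX2 (Hpos k ltac:(lia))).
  assert (Hedge := is_derive_mult (fun s => / 2 * elen N (X1 s) (X2 s) k)
                     (fun s => f s k false + f s k true) t _ _
                     (is_derive_scal _ t (/ 2) _ Hlen)
                     (is_derive_plus _ _ t _ _ (Hf k false) (Hf k true)) Rmult_comm).
  replace (_ * (padd _ _ k false + _)) with
    (/ 2 * (elen N (X1 t) (X2 t) k * stretch_rate N (X1 t) (X2 t) dX1 dX2 k false)
       * (f t k false + f t k true) + / 2 * elen N (X1 t) (X2 t) k * (df k false + df k true));
    [exact Hedge | unfold stretch_rate, padd, pmul, ds; ring].
Qed.

Lemma is_derive_Wh (N : nat) (X1 X2 K : R -> nat -> R) (dX1 dX2 dK : nat -> R) (t : R) :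
  (0 < N)%nat ->
  (forall j, is_derive (fun s => X1 s j) t (dX1 j)) ->
  (forall j, is_derive (fun s => X2 s j) t (dX2 j)) ->
  (forall j, is_derive (fun s => K s j) t (dK j)) ->
  (forall k, (k < N)%nat -> 0 < elen N (X1 t) (X2 t) k) ->
  is_derive (fun s => Wh N (X1 s) (X2 s) (K s)) t
    (lump N (X1 t) (X2 t) (pmul (lift N dK) (lift N (K t)))
     + / 2 * lump N (X1 t) (X2 t)
               (pmul (stretch_rate N (X1 t) (X2 t) dX1 dX2) (pmul (lift N (K t)) (lift N (K t))))).
Proof.
  intros HN HX1 HX2 HK Hpos.
  assert (Hsq : forall k b,
    is_derive (fun s => pmul (pmul (lift N (K s)) (lift N (K s))) pone k b) t
              (pscal 2 (pmul (lift N dK) (lift N (K t))) k b)).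
  { assert (Hnode : forall j, is_derive (fun s => K s j * K s j * 1) t (2 * (dK j * K t j))).
    { intros j. apply (is_derive_ext (fun s => K s j ^ 2)); [intros s; simpl; ring|].
      replace (2 * _) with (INR 2 * dK j * K t j ^ 1) by (simpl; ring).
      apply is_derive_pow, HK. }
    intros k [|]; apply Hnode. }
  assert (H := is_derive_scal _ t (/ 2) _ (is_derive_lump N X1 X2 dX1 dX2 _ _ t HN HX1 HX2 Hsq Hpos)).
  unfold Wh. rewrite lump_padd, lump_pscal in H.
  replace (lump N (X1 t) (X2 t) (pmul _ (pmul (pmul _ _) pone))) with
    (lump N (X1 t) (X2 t) (pmul (stretch_rate N (X1 t) (X2 t) dX1 dX2) (pmul (lift N (K t)) (lift N (K t)))))
    in H by (apply lump_ext; intros k b; unfold pmul, pone; ring).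
  replace (_ + _) with (/ 2 * (2 * lump N (X1 t) (X2 t) (pmul (lift N dK) (lift N (K t)))
     + lump N (X1 t) (X2 t) (pmul (stretch_rate N (X1 t) (X2 t) dX1 dX2) (pmul (lift N (K t)) (lift N (K t))))))
    by field.
  exact H.
Qed.

Section Energy_identity.

Variables (N : nat) (X1 X2 V K dX1 dX2 dK : nat -> R).

Local Notation lmp := (lump N X1 X2).
Local Notation n1 := (nrm1 N X1 X2).
Local Notation n2 := (nrm2 N X1 X2).
Local Notation D := (ds N X1 X2).
Local Notation L := (lift N).

Hypothesis eq1_V :
  lmp (pmul (padd (pmul n1 (L dX1)) (pmul n2 (L dX2))) (L V)) = lmp (pmul (L V) (L V)).

Hypothesis eq2_dX :
  lmp (padd (pmul (pmul (L V) n1) (L dX1)) (pmul (pmul (L V) n2) (L dX2)))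
  = lmp (padd
      (pmul (padd (popp (pmul (D K) n1)) (pscal (/ 2) (pmul (pmul (L K) (L K)) (D X1)))) (D dX1))
      (pmul (padd (popp (pmul (D K) n2)) (pscal (/ 2) (pmul (pmul (L K) (L K)) (D X2)))) (D dX2))).

Hypothesis eq3_K :
  lmp (pmul (L dK) (L K))
  = lmp (pmul (padd (pmul n1 (D dX1)) (pmul n2 (D dX2))) (D K))
    - lmp (pmul (pmul (padd (pmul (D X1) (D dX1)) (pmul (D X2) (D dX2))) (L K)) (L K)).

Lemma energy_rate_identity :
  lmp (pmul (L dK) (L K))
  + / 2 * lmp (pmul (stretch_rate N X1 X2 dX1 dX2) (pmul (L K) (L K)))
  = - lmp (pmul (L V) (L V)).
Proof.
  set (Q := stretch_rate N X1 X2 dX1 dX2).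
  set (A := lmp (pmul (padd (pmul n1 (D dX1)) (pmul n2 (D dX2))) (D K))).
  assert (HV : lmp (pmul (L V) (L V)) = - A + / 2 * lmp (pmul Q (pmul (L K) (L K)))).
  { unfold A. rewrite <- eq1_V, <- lump_pscal, <- lump_popp, <- lump_padd.
    transitivity (lmp (padd (pmul (pmul (L V) n1) (L dX1)) (pmul (pmul (L V) n2) (L dX2)))).
    { apply lump_ext. intros k b. unfold pmul, padd. ring. }
    rewrite eq2_dX. apply lump_ext. intros k b.
    unfold Q, stretch_rate, pmul, padd, popp, pscal. ring. }
  assert (HK : lmp (pmul (pmul (padd (pmul (D X1) (D dX1)) (pmul (D X2) (D dX2))) (L K)) (L K))
               = lmp (pmul Q (pmul (L K) (L K)))).
  { apply lump_ext. intros k b. unfold Q, stretch_rate, pmul. ring. }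
  rewrite eq3_K, HK, HV. fold A. lra.
Qed.

End Energy_identity.

Lemma nonincreasing_of_derive_nonpos (W D : R -> R) :
  (forall t, 0 < t -> is_derive W t (D t)) ->
  (forall t, 0 < t -> D t <= 0) ->
  filterlim W (at_right 0) (locally (W 0)) ->
  forall a b, 0 <= a -> a <= b -> W b <= W a.
Proof.
  intros HD HDn HW0.
  assert (Hpos : forall a b, 0 < a -> a <= b -> W b <= W a).
  { intros a b Ha Hab. destruct (Rle_lt_or_eq_dec a b Hab) as [Hlt | <-]; [|lra].
    destruct (MVT_cor2 W D a b Hlt) as [c [Hc Hac]].
    { intros c Hc. apply is_derive_Reals, HD. lra. }
    assert (D c <= 0) by (apply HDn; lra). nra. }
  intros a b Ha Hab. destruct (Rle_lt_or_eq_dec 0 a Ha) as [Ha' | <-]; [now apply Hpos|].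
  destruct (Rle_lt_or_eq_dec 0 b Hab) as [Hb | <-]; [|lra].
  assert (Hlim := filterlim_le (F := at_right 0) (fun _ => W b) W (W b) (W 0)).
  apply Hlim; [| apply filterlim_const | exact HW0].
  exists (mkposreal b Hb). intros s Hs Hs0. apply Hpos; [exact Hs0|].
  apply Rabs_def2 in Hs. unfold minus, plus, opp in Hs. simpl in Hs. lra.
Qed.

Section Limits.

Context {T : Type} (F : (T -> Prop) -> Prop) {FF : Filter F}.

Lemma filterlim_Rplus_comp (f g : T -> R) (a b : R) :
  filterlim f F (locally a) -> filterlim g F (locally b) ->
  filterlim (fun s => f s + g s) F (locally (a + b)).
Proof. intros Hf Hg. eapply filterlim_comp_2; eauto. apply (filterlim_plus a b). Qed.

Lemma filterlim_Rmult_comp (f g : T -> R) (a b : R) :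
  filterlim f F (locally a) -> filterlim g F (locally b) ->
  filterlim (fun s => f s * g s) F (locally (a * b)).
Proof. intros Hf Hg. eapply filterlim_comp_2; eauto. apply (filterlim_mult a b). Qed.

Lemma filterlim_Rminus_comp (f g : T -> R) (a b : R) :
  filterlim f F (locally a) -> filterlim g F (locally b) ->
  filterlim (fun s => f s - g s) F (locally (a - b)).
Proof.
  intros Hf Hg. apply filterlim_Rplus_comp; [exact Hf|].
  eapply filterlim_comp; [exact Hg | apply (filterlim_opp b)].
Qed.

Lemma filterlim_pow_comp (f : T -> R) (a : R) (n : nat) :
  filterlim f F (locally a) -> filterlim (fun s => f s ^ n) F (locally (a ^ n)).
Proof.
  intros Hf. induction n as [|n IHn]; simpl.
  - apply filterlim_const.
  - now apply filterlim_Rmult_comp.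
Qed.

Lemma filterlim_sqrt_comp (f : T -> R) (a : R) :
  filterlim f F (locally a) -> filterlim (fun s => sqrt (f s)) F (locally (sqrt a)).
Proof. intros Hf. eapply filterlim_comp; [exact Hf | apply continuous_sqrt]. Qed.

Lemma filterlim_sum_f_R0 (u : T -> nat -> R) (l : nat -> R) (n : nat) :
  (forall k, filterlim (fun s => u s k) F (locally (l k))) ->
  filterlim (fun s => sum_f_R0 (u s) n) F (locally (sum_f_R0 l n)).
Proof.
  intros Hu. induction n as [|n IHn]; simpl; [apply Hu|].
  now apply filterlim_Rplus_comp.
Qed.

Lemma filterlim_Wh (N : nat) (X1 X2 K : T -> nat -> R) (l1 l2 lK : nat -> R) :
  (forall j, filterlim (fun s => X1 s j) F (locally (l1 j))) ->
  (forall j, filterlim (fun s => X2 s j) F (locally (l2 j))) ->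
  (forall j, filterlim (fun s => K s j) F (locally (lK j))) ->
  filterlim (fun s => Wh N (X1 s) (X2 s) (K s)) F (locally (Wh N l1 l2 lK)).
Proof.
  intros HX1 HX2 HK.
  unfold Wh, lump, elen, hcomp, pmul, lift, pone, nd.
  apply filterlim_Rmult_comp; [apply filterlim_const|].
  apply filterlim_sum_f_R0. intros k.
  repeat first [ apply filterlim_Rminus_comp | apply filterlim_Rplus_comp
               | apply filterlim_Rmult_comp | apply filterlim_pow_comp
               | apply filterlim_sqrt_comp | apply filterlim_const
               | apply HX1 | apply HX2 | apply HK ].
Qed.

End Limits.

(* X^h(.,t) = (X1 t, X2 t), V^h(.,t) = V t, kappa^h(.,t) = K t (nodal values);
   dX1, dX2, dK are their time derivatives. *)
Theorem theorem3p1 (N : nat) (HN : (3 <= N)%nat)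
  (X1 X2 V K dX1 dX2 dK : R -> nat -> R)
  (X01 X02 K0 : nat -> R)
  (* differentiability in time *)
  (HdX1 : forall t j, 0 < t -> is_derive (fun s => X1 s j) t (dX1 t j))
  (HdX2 : forall t j, 0 < t -> is_derive (fun s => X2 s j) t (dX2 t j))
  (HdK  : forall t j, 0 < t -> is_derive (fun s => K s j) t (dK t j))
  (* (right-)continuity at t = 0 *)
  (HcX1 : forall j, filterlim (fun s => X1 s j) (at_right 0) (locally (X1 0 j)))
  (HcX2 : forall j, filterlim (fun s => X2 s j) (at_right 0) (locally (X2 0 j)))
  (HcK  : forall j, filterlim (fun s => K s j) (at_right 0) (locally (K 0 j)))
  (* nondegenerate polygon *)
  (Hlen : forall t k, 0 <= t -> (k < N)%nat -> 0 < elen N (X1 t) (X2 t) k)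
  (* first equation *)
  (Heq1 : forall t, 0 < t -> forall phi : nat -> R,
     lump N (X1 t) (X2 t)
       (pmul (padd (pmul (nrm1 N (X1 t) (X2 t)) (lift N (dX1 t)))
                   (pmul (nrm2 N (X1 t) (X2 t)) (lift N (dX2 t))))
             (lift N phi))
     = lump N (X1 t) (X2 t) (pmul (lift N (V t)) (lift N phi)))
  (* second equation *)
  (Heq2 : forall t, 0 < t -> forall om1 om2 : nat -> R,
     lump N (X1 t) (X2 t)
       (padd (pmul (pmul (lift N (V t)) (nrm1 N (X1 t) (X2 t))) (lift N om1))
             (pmul (pmul (lift N (V t)) (nrm2 N (X1 t) (X2 t))) (lift N om2)))
     = lump N (X1 t) (X2 t)
       (padd
         (pmul (padd (popp (pmul (ds N (X1 t) (X2 t) (K t)) (nrm1 N (X1 t) (X2 t))))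
                     (pscal (/ 2) (pmul (pmul (lift N (K t)) (lift N (K t)))
                                        (ds N (X1 t) (X2 t) (X1 t)))))
               (ds N (X1 t) (X2 t) om1))
         (pmul (padd (popp (pmul (ds N (X1 t) (X2 t) (K t)) (nrm2 N (X1 t) (X2 t))))
                     (pscal (/ 2) (pmul (pmul (lift N (K t)) (lift N (K t)))
                                        (ds N (X1 t) (X2 t) (X2 t)))))
               (ds N (X1 t) (X2 t) om2))))
  (* third equation *)
  (Heq3 : forall t, 0 < t -> forall psi : nat -> R,
     lump N (X1 t) (X2 t) (pmul (lift N (dK t)) (lift N psi))
     = lump N (X1 t) (X2 t)
         (pmul (padd (pmul (nrm1 N (X1 t) (X2 t)) (ds N (X1 t) (X2 t) (dX1 t)))
                     (pmul (nrm2 N (X1 t) (X2 t)) (ds N (X1 t) (X2 t) (dX2 t))))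
               (ds N (X1 t) (X2 t) psi))
       - lump N (X1 t) (X2 t)
         (pmul (pmul (padd (pmul (ds N (X1 t) (X2 t) (X1 t)) (ds N (X1 t) (X2 t) (dX1 t)))
                           (pmul (ds N (X1 t) (X2 t) (X2 t)) (ds N (X1 t) (X2 t) (dX2 t))))
                     (lift N (K t)))
               (lift N psi)))
  (* initial data *)
  (HX10 : forall j, X1 0 j = X01 j)
  (HX20 : forall j, X2 0 j = X02 j)
  (HK0  : forall j, K 0 j = K0 j) :
  forall t t', t >= t' -> t' >= 0 ->
    Wh N (X1 t) (X2 t) (K t) <= Wh N (X1 t') (X2 t') (K t') /\
    Wh N (X1 t') (X2 t') (K t') <= Wh N X01 X02 K0.
Proof.
  intros t t' Htt' Ht'.
  replace X01 with (X1 0) by (apply functional_extensionality; exact HX10).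
  replace X02 with (X2 0) by (apply functional_extensionality; exact HX20).
  replace K0 with (K 0) by (apply functional_extensionality; exact HK0).
  assert (HN0 : (0 < N)%nat) by lia.
  assert (Hmono : forall a b, 0 <= a -> a <= b ->
                  Wh N (X1 b) (X2 b) (K b) <= Wh N (X1 a) (X2 a) (K a)).
  { apply (nonincreasing_of_derive_nonpos (fun s => Wh N (X1 s) (X2 s) (K s))
             (fun s => - lump N (X1 s) (X2 s) (pmul (lift N (V s)) (lift N (V s))))).
    - intros s Hs. rewrite <- (energy_rate_identity N (X1 s) (X2 s) (V s) (K s) (dX1 s) (dX2 s) (dK s)
                                 (Heq1 s Hs (V s)) (Heq2 s Hs (dX1 s) (dX2 s)) (Heq3 s Hs (K s))).
      apply is_derive_Wh; auto. intros k Hk. apply Hlen; [lra | exact Hk].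
    - intros s _. enough (0 <= lump N (X1 s) (X2 s) (pmul (lift N (V s)) (lift N (V s)))) by lra.
      apply lump_nonneg. intros k b. apply Rle_0_sqr.
    - apply (filterlim_Wh (at_right 0)); assumption. }
  split; apply Hmono; lra.
Qed.
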